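(* Let $\mathbb{F}$ be a field of characteristic zero, $d\ge 2$, $n=2d-2$, $P_n=\mathbb{F}[x_1,\dots,x_n]$ and $I_n=\big(x_1^2,\dots,x_n^2,(x_1+\cdots+x_n)^2\big)$; let $\mathrm{in}(I_n)$ be its initial ideal with respect to the reverse lexicographic order. If $\mu\in P_n$ is a monomial with $\deg(\mu)\le d-2$ and $\mu\notin\mathrm{in}(I_n)$, then there exists a monomial $\widetilde{\mu}\in P_n$ which is a multiple of $\mu$, with $\deg(\widetilde\mu)=\deg(\mu)+1$ and $\widetilde\mu\notin\mathrm{in}(I_n)$.
   Context: The reverse lexicographic order is taken with $x_1>x_2>\cdots>x_n$. *)

From HB Require Import structures.
From mathcomp Require Import all_boot all_order all_algebra.
From mathcomp Require Import mpoly.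
Set Implicit Arguments. Unset Strict Implicit. Unset Printing Implicit Defensive.
Import GRing.Theory.
Local Open Scope ring_scope.

(* Variables x_1,...,x_n are 'X_0,...,'X_(n-1); the order is x_1 > ... > x_n. *)

Definition revlex_lt (n : nat) (m1 m2 : 'X_{1..n}) : bool :=
  (mdeg m1 < mdeg m2)%N ||
  ((mdeg m1 == mdeg m2) &&
   [exists i : 'I_n, (m2 i < m1 i)%N &&
      [forall j : 'I_n, (i < j)%N ==> (m1 j == m2 j)]]).

Definition is_lead_mono (F : fieldType) (n : nat) (p : {mpoly F[n]})
  (m : 'X_{1..n}) : Prop :=
  m \in msupp p /\ forall m', m' \in msupp p -> m' != m -> revlex_lt m' m.

Definition in_ideal (F : fieldType) (n : nat) (S : {mpoly F[n]} -> Prop)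
  (p : {mpoly F[n]}) : Prop :=
  exists (k : nat) (c g : 'I_k -> {mpoly F[n]}),
    (forall i, S (g i)) /\ p = \sum_(i < k) c i * g i.

Definition In_gens (F : fieldType) (n : nat) (q : {mpoly F[n]}) : Prop :=
  (exists i : 'I_n, q = 'X_i ^+ 2) \/ q = (\sum_(i < n) 'X_i) ^+ 2.

Definition In_ideal (F : fieldType) (n : nat) : {mpoly F[n]} -> Prop :=
  in_ideal (@In_gens F n).

Definition initial_ideal (F : fieldType) (n : nat) (I : {mpoly F[n]} -> Prop)
  : {mpoly F[n]} -> Prop :=
  in_ideal (fun q => exists (f : {mpoly F[n]}) (m : 'X_{1..n}),
                       I f /\ f != 0 /\ is_lead_mono f m /\ q = 'X_[m]).

(* Call a monomial of P_n balanced when it is squarefree and, for every k, at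
   most (k + 1)/2 of the variables x_1, ..., x_k divide it.

   A monomial outside in(I_n) is balanced.  Otherwise some prefix x_1..x_k
   carries p variables of mu with k - p <= p - 2.  Let s = x_1 + ... + x_n and
   z the sum of the k - p prefix variables not dividing mu; then
   (s - z)^p = (-z)^(p-1) (p s - z) mod s^2 lies in I_n, since z^(p-1) has no
   squarefree monomial.  So does its squarefree part, whose revlex leading
   monomial is the prefix part of mu, a divisor of mu.

   A balanced monomial T of degree K + 1 with 2K < n is not in in(I_n).  In
   new variables y_0, ..., y_K, send the r-th variable of T to y_r and the r-th
   variable outside T to -y_(r+1) (to 0 once r >= K), so that s goes to y_0.
   Taking the coefficient of y_0 ... y_K kills I_n, does not kill X^T, and
   kills every revlex-smaller monomial of degree K + 1, which by balance must
   send two of its variables to the same y_j.  Hence no element of I_n has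
   leading monomial T.

   Finally, if mu is balanced and 2 deg mu < n, multiplying mu by its last
   missing variable keeps it balanced. *)

From mathcomp Require Import all_boot all_order all_algebra.
From mathcomp Require Import mpoly zify ring.
Import GRing.Theory.
Local Open Scope ring_scope.
Set Implicit Arguments. Unset Strict Implicit. Unset Printing Implicit Defensive.

Section IdealClosure.
Variables (F : fieldType) (n : nat) (S : {mpoly F[n]} -> Prop).
Implicit Types (p q : {mpoly F[n]}).

Lemma in_ideal0 : in_ideal S 0.
Proof. by exists 0%N, (fun _ => 0), (fun _ => 0); split; [case | rewrite big_ord0]. Qed.

Lemma in_ideal_gen g : S g -> in_ideal S g.
Proof. by move=> Sg; exists 1%N, (fun _ => 1), (fun _ => g); rewrite big_ord1 mul1r. Qed.

Lemma in_idealD p q : in_ideal S p -> in_ideal S q -> in_ideal S (p + q).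
Proof.
move=> [k1 [c1 [g1 [Sg1 ->]]]] [k2 [c2 [g2 [Sg2 ->]]]].
exists (k1 + k2)%N.
exists (fun i => match split i with inl a => c1 a | inr b => c2 b end).
exists (fun i => match split i with inl a => g1 a | inr b => g2 b end).
split; first by move=> i; case: (split i).
rewrite big_split_ord /=; congr (_ + _); apply: eq_bigr => i _.
  by rewrite (unsplitK (inl _ i)).
by rewrite (unsplitK (inr _ i)).
Qed.

Lemma in_idealMl c p : in_ideal S p -> in_ideal S (c * p).
Proof.
move=> [k [c1 [g1 [Sg1 ->]]]]; exists k, (fun i => c * c1 i), g1; split => //.
by rewrite mulr_sumr; apply: eq_bigr => i _; rewrite mulrA.
Qed.

Lemma in_idealMr c p : in_ideal S p -> in_ideal S (p * c).
Proof. by rewrite mulrC; apply: in_idealMl. Qed.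

Lemma in_idealB p q : in_ideal S p -> in_ideal S q -> in_ideal S (p - q).
Proof. by move=> Ip Iq; apply: in_idealD; rewrite // -mulN1r; apply: in_idealMl. Qed.

Lemma in_ideal_sum (I : Type) (r : seq I) (P : pred I) (G : I -> {mpoly F[n]}) :
  (forall i, P i -> in_ideal S (G i)) -> in_ideal S (\sum_(i <- r | P i) G i).
Proof.
move=> IG; elim/big_rec: _ => [|i x Pi Ix]; first exact: in_ideal0.
by apply: in_idealD => //; apply: IG.
Qed.

End IdealClosure.

Definition msqfree {n} (m : 'X_{1..n}) : bool := [forall i, m i <= 1]%N.

Section SquarefreePart.
Variables (F : fieldType) (n : nat).
Implicit Types (p q : {mpoly F[n]}) (m : 'X_{1..n}).

Lemma msqfreeP m : reflect (forall i, m i <= 1)%N (msqfree m).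
Proof. exact: forallP. Qed.

Lemma In_ideal_nonsqfree q : (forall m, m \in msupp q -> ~~ msqfree m) -> In_ideal q.
Proof.
move=> nsq; rewrite (mpolyE q) big_seq; apply: in_ideal_sum => m /nsq.
rewrite negb_forall => /existsP [i]; rewrite -ltnNge => mi_gt1.
have -> : m = (m - U_(i) *+ 2 + U_(i) *+ 2)%MM.
  rewrite submK //; apply/mnm_lepP => j; rewrite mulmnE mnm1E.
  by case: eqP => [<-|]; rewrite ?mul1n ?mul0n.
rewrite mpolyXD -mpolyXn scalerAl; apply: in_idealMl.
by apply: in_ideal_gen; left; exists i.
Qed.

Lemma mcoeff_msupp_filter (P : pred 'X_{1..n}) q m :
  (\sum_(k <- msupp q | P k) q@_k *: 'X_[k])@_m = if P m then q@_m else 0.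
Proof.
rewrite raddf_sum /= (eq_bigr (fun k => q@_k * (k == m)%:R)); last first.
  by move=> k _; rewrite mcoeffZ mcoeffX.
have qm : q@_m = \sum_(k <- msupp q) q@_k * (k == m)%:R.
  rewrite {1}(mpolyE q) raddf_sum /=.
  by apply: eq_bigr => k _; rewrite mcoeffZ mcoeffX.
case: ifP => Pm.
  rewrite qm big_mkcond /=; apply: eq_bigr => k _.
  by case: (k =P m) => [->|_]; rewrite ?Pm // mulr0; case: ifP.
by rewrite big1 // => k Pk; case: (k =P m) => [km|_]; [rewrite km Pm in Pk | rewrite mulr0].
Qed.

Definition sqfree_part q : {mpoly F[n]} :=
  \sum_(m <- msupp q | msqfree m) q@_m *: 'X_[m].

Lemma In_ideal_sqfree_part q : In_ideal q -> In_ideal (sqfree_part q).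
Proof.
move=> Iq; have -> : sqfree_part q = q - \sum_(m <- msupp q | ~~ msqfree m) q@_m *: 'X_[m].
  by rewrite {2}(mpolyE q) (bigID msqfree) /= addrK.
apply: in_idealB => //; apply: In_ideal_nonsqfree => m.
by rewrite mcoeff_msupp mcoeff_msupp_filter; case: ifP => //; rewrite eqxx.
Qed.

End SquarefreePart.

Section InitialIdeal.
Variables (F : fieldType) (n : nat).
Implicit Types (I : {mpoly F[n]} -> Prop) (f : {mpoly F[n]}) (m r T : 'X_{1..n}).

Lemma revlex_ltD2l r m T : revlex_lt m T -> revlex_lt (r + m) (r + T).
Proof.
rewrite /revlex_lt !mdegD ltn_add2l eqn_add2l.
case/orP => [->//|/andP [-> /existsP [i /andP [lt_i /forallP eq_gt_i]]]].
apply/orP; right; apply/existsP; exists i; rewrite !mnmDE ltn_add2l lt_i /=.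
by apply/forallP => j; rewrite !mnmDE eqn_add2l; apply: eq_gt_i.
Qed.

Lemma revlex_lt_total m T :
  mdeg m = mdeg T -> m != T -> revlex_lt m T || revlex_lt T m.
Proof.
move=> degE neq; have [i0 neq_i0] : exists i0, m i0 != T i0.
  by apply/existsP; apply: contraNT neq => /existsPn eqmT; apply/eqP/mnmP => i; apply/eqP/negPn.
case: (@arg_maxnP _ i0 (fun i => m i != T i) (@nat_of_ord n) neq_i0) => i neq_i max_i.
have eq_gt_i (j : 'I_n) : (i < j)%N -> m j = T j.
  by move=> lt_ij; apply/eqP; apply: contraTT lt_ij => /max_i; rewrite -leqNgt.
rewrite /revlex_lt degE ltnn eqxx /=.
case: (ltngtP (m i) (T i)) neq_i => // lt_i _; apply/orP; [right | left];
  apply/existsP; exists i; rewrite lt_i /=;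
  by apply/forallP => j; apply/implyP => /eq_gt_i ->.
Qed.

Lemma is_lead_monoX T : is_lead_mono ('X_[T] : {mpoly F[n]}) T.
Proof. by split=> [|m]; rewrite msuppX mem_seq1 // => /eqP ->; rewrite eqxx. Qed.

Lemma is_lead_monoMX f T r : is_lead_mono f T -> is_lead_mono (f * 'X_[r]) (r + T).
Proof.
move=> [suppT ltT]; split; first by rewrite (perm_mem (msuppMX _ _)) map_f.
move=> m'; rewrite (perm_mem (msuppMX _ _)) => /mapP [m suppm ->] neq.
by apply/revlex_ltD2l/ltT => //; apply: contraNneq neq => ->.
Qed.

Lemma initial_idealX_of_lead I f T mu :
  I f -> is_lead_mono f T -> (T <= mu)%MM -> initial_ideal I 'X_[mu].
Proof.
move=> If leadT le_T_mu; rewrite -(submK le_T_mu) mpolyXD.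
apply/in_idealMl/in_ideal_gen; exists f, T; split=> //; split=> //.
by apply: contraTneq leadT.1 => ->; rewrite msupp0.
Qed.

Lemma initial_idealX_lead I T :
  (forall f r, I f -> I (f * 'X_[r])) -> initial_ideal I 'X_[T] ->
  exists2 f, I f & is_lead_mono f T.
Proof.
move=> IMX [k [c [g [Ig XT]]]].
have [j cgj] : exists j, (c j * g j)@_T != 0.
  apply/existsP; apply: contraT; rewrite negb_exists => /forallP cg0.
  have := congr1 (mcoeff T) XT; rewrite mcoeffX eqxx raddf_sum big1 => [|j _].
    by move/eqP; rewrite oner_eq0.
  by apply/eqP/negPn/cg0.
have [f [mf [If [_ [leadf gj]]]]] := Ig j.
move: cgj; rewrite gj -mcoeff_msupp (perm_mem (msuppMX _ _)) => /mapP [r _ ->].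
by exists (f * 'X_[r]); [apply: IMX | rewrite addmC; apply: is_lead_monoMX].
Qed.

Variables (K : nat) (lq : n.-tuple {mpoly F[K]}) (o : 'X_{1..K}).

Lemma mcoeff_comp_lead f T :
  is_lead_mono f T -> (forall m, revlex_lt m T -> ('X_[m] \mPo lq)@_o = 0) ->
  (f \mPo lq)@_o = f@_T * ('X_[T] \mPo lq)@_o.
Proof.
move=> [suppT ltT] lt_eq0.
rewrite comp_mpolyEX raddf_sum (bigD1_seq T) ?msupp_uniq //= mcoeffZ.
rewrite big1_seq ?addr0 // => m /andP [neq suppm].
by rewrite mcoeffZ lt_eq0 ?mulr0 // ltT.
Qed.

Lemma mcoeff_comp_In_ideal f :
  (forall q i, (q * tnth lq i ^+ 2)@_o = 0) ->
  (forall q, (q * (\sum_i tnth lq i) ^+ 2)@_o = 0) ->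
  In_ideal f -> (f \mPo lq)@_o = 0.
Proof.
move=> sq_eq0 sum_sq_eq0 [k [c [g [gensg ->]]]].
have compX i : 'X_i \mPo lq = tnth lq i by rewrite comp_mpolyXU -tnth_nth.
rewrite rmorph_sum raddf_sum /=; apply: big1 => i _.
rewrite rmorphM /=; case: (gensg i) => [[j ->]|->]; rewrite rmorphXn /=.
  by rewrite compX.
by rewrite rmorph_sum /=; under eq_bigr do rewrite compX.
Qed.

Lemma notin_initial_In_ideal T :
  (forall q i, (q * tnth lq i ^+ 2)@_o = 0) ->
  (forall q, (q * (\sum_i tnth lq i) ^+ 2)@_o = 0) ->
  ('X_[T] \mPo lq)@_o != 0 ->
  (forall m, revlex_lt m T -> ('X_[m] \mPo lq)@_o = 0) ->
  ~ initial_ideal (@In_ideal F n) 'X_[T].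
Proof.
move=> sq_eq0 sum_sq_eq0 XT_neq0 lt_eq0.
case/initial_idealX_lead=> [f r|f If leadT]; first exact: in_idealMr.
have := mcoeff_comp_In_ideal sq_eq0 sum_sq_eq0 If.
rewrite (mcoeff_comp_lead leadT lt_eq0) => /eqP; apply/negP.
by rewrite mulf_neq0 // -mcoeff_msupp; case: leadT.
Qed.

End InitialIdeal.

Section PrefixSum.
Variable n : nat.
Implicit Types (b : 'I_n -> nat) (x : nat).

Definition prefix_sum b x : nat := (\sum_(j < n | j < x) b j)%N.

Lemma prefix_sum0 b : prefix_sum b 0 = 0%N.
Proof. by rewrite /prefix_sum big_pred0. Qed.

Lemma prefix_sumS b x (lt_xn : (x < n)%N) :
  prefix_sum b x.+1 = (prefix_sum b x + b (Ordinal lt_xn))%N.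
Proof.
rewrite /prefix_sum (bigD1 (Ordinal lt_xn)) //= addnC; congr (_ + _)%N.
by apply: eq_bigl => j; rewrite ltnS leq_eqVlt -val_eqE /=; case: ltngtP.
Qed.

Lemma prefix_sum_ord b (i : 'I_n) : prefix_sum b i.+1 = (prefix_sum b i + b i)%N.
Proof. by rewrite (prefix_sumS _ (ltn_ord i)); congr (_ + b _)%N; apply: val_inj. Qed.

Lemma prefix_sum_total b x : (n <= x)%N -> prefix_sum b x = (\sum_i b i)%N.
Proof. by move=> le_nx; apply: eq_bigl => j; rewrite (leq_trans (ltn_ord j)). Qed.

Lemma leq_prefix_sum b x y : (x <= y)%N -> (prefix_sum b x <= prefix_sum b y)%N.
Proof.
move=> le_xy; rewrite /prefix_sum big_mkcond [leqRHS]big_mkcond leq_sum // => j _.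
by case: ifP => // lt_jx; rewrite (leq_trans lt_jx le_xy).
Qed.

Lemma prefix_sumD b1 b2 x :
  prefix_sum (fun i => b1 i + b2 i)%N x = (prefix_sum b1 x + prefix_sum b2 x)%N.
Proof. exact: big_split. Qed.

Lemma prefix_sum1 x : (x <= n)%N -> prefix_sum (fun _ => 1%N) x = x.
Proof.
elim: x => [|x IHx] lt_xn; first exact: prefix_sum0.
by rewrite (prefix_sumS _ lt_xn) IHx ?addn1 // ltnW.
Qed.

Lemma prefix_sum_compl b x : (forall i, b i <= 1)%N -> (x <= n)%N ->
  (prefix_sum (fun i => 1 - b i) x + prefix_sum b x)%N = x.
Proof.
move=> b01 le_xn; rewrite -prefix_sumD -[RHS](prefix_sum1 le_xn).
by apply: eq_bigr => i _; rewrite subnK.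
Qed.

Lemma prefix_sum_delta (j : 'I_n) x : prefix_sum (fun i => (j == i : nat)) x = (j < x)%N.
Proof.
rewrite /prefix_sum; case: ltnP => [lt_jx | le_xj].
  by rewrite (bigD1 j) //= eqxx big1 // => i /andP [_ /negPf]; rewrite eq_sym => ->.
by rewrite big1 // => i lt_ix; case: eqP => // ji; move: le_xj lt_ix; rewrite ji; lia.
Qed.

Lemma prefix_sum_suffix1 b x : (x <= n)%N -> (forall i : 'I_n, x <= i -> b i = 1)%N ->
  (prefix_sum b x + (n - x))%N = (\sum_i b i)%N.
Proof.
move=> le_xn b1; suff IH k : (x + k <= n)%N -> prefix_sum b (x + k) = (prefix_sum b x + k)%N.
  by rewrite -IH subnKC // prefix_sum_total.
elim: k => [|k IHk] le_n; first by rewrite !addn0.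
have lt_n : (x + k < n)%N by rewrite -addnS.
by rewrite addnS (prefix_sumS _ lt_n) IHk ?(ltnW lt_n) // b1 ?addn1 ?addnS //= leq_addr.
Qed.

Lemma leq_prefix_sum_total b (i : 'I_n) : (prefix_sum b i + b i <= \sum_j b j)%N.
Proof. by rewrite -prefix_sum_ord -(prefix_sum_total b (leqnn n)) leq_prefix_sum. Qed.

Lemma sum_prefix_rank_eq b t : (forall i, b i <= 1)%N ->
  (\sum_i ((b i == 1%N) && (prefix_sum b i == t) : nat))%N = (t < \sum_i b i)%N.
Proof.
move=> b01; set rank_t := fun i => ((b i == 1%N) && (prefix_sum b i == t) : nat).
suff IH x : (x <= n)%N -> prefix_sum rank_t x = (t < prefix_sum b x)%N.
  by rewrite -(prefix_sum_total _ (leqnn n)) IH // prefix_sum_total.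
elim: x => [|x IHx] le_xn; first by rewrite !prefix_sum0.
rewrite !(prefix_sumS _ le_xn) (IHx (ltnW le_xn)).
rewrite /rank_t; move: (b01 (Ordinal le_xn)) (prefix_sum b x) => /=.
case: (b _) => [|[|//]] _ p; first by rewrite andFb !addn0.
by rewrite eqxx addn1 ltnS; case: ltngtP.
Qed.

End PrefixSum.

Definition balanced n (mu : 'X_{1..n}) : bool :=
  msqfree mu && [forall x : 'I_n.+1, 2 * prefix_sum (fun i => mu i) x <= x + 1]%N.

Lemma exprD_mod_sqr (R : comPzRingType) (a b : R) N :
  exists Q, (a + b) ^+ N.+1 = a ^+ 2 * Q + b ^+ N * (b + a *+ N.+1).
Proof.
elim: N => [|N [Q IH]]; first by exists 0; rewrite expr1 expr0 mul1r mulr0 add0r mulr1n addrC.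
exists ((a + b) * Q + b ^+ N *+ N.+1).
rewrite exprS IH [b ^+ N.+1]exprS -(mulr_natr a N.+1) -(mulr_natr a N.+2).
rewrite -(mulr_natr (b ^+ N) N.+1) [N.+2%:R]mulrS.
move: (N.+1%:R : R) (b ^+ N) => c B; ring.
Qed.

Section PartialLinearForm.
Variables (F : fieldType) (n : nat) (A : pred 'I_n).
Implicit Types (q : {mpoly F[n]}) (m : 'X_{1..n}).

Lemma mcoeffMXU q (i : 'I_n) m :
  (q * 'X_i)@_m = if (0 < m i)%N then q@_(m - U_(i))%MM else 0.
Proof.
case: ifP => mi_gt0.
  have mE : (m - U_(i) + U_(i))%MM = m by rewrite submK // lep1mP -lt0n.
  by rewrite -{1}mE addmC mcoeffMX.
apply/memN_msupp_eq0; rewrite (perm_mem (msuppMX _ _)); apply/mapP => -[k _ mE].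
by move: mi_gt0; rewrite mE mnmDE mnm1E eqxx; case: (k i).
Qed.

Lemma mcoeffMsumX q m : (q * \sum_(i | A i) 'X_i)@_m =
  \sum_(i | A i) (if (0 < m i)%N then q@_(m - U_(i))%MM else 0).
Proof. by rewrite mulr_sumr raddf_sum; apply: eq_bigr => i _; apply: mcoeffMXU. Qed.

Lemma msupp_sumX_exp N m : ((\sum_(i | A i) 'X_i) ^+ N : {mpoly F[n]})@_m != 0 ->
  mdeg m = N /\ (forall i, ~~ A i -> m i = 0%N).
Proof.
elim: N m => [|N IHN] m.
  rewrite expr0 mcoeff1; case: (m =P 0%MM) => [-> _|_]; last by rewrite eqxx.
  by split=> [|i _]; rewrite ?mdeg0 ?mnm0E.
rewrite exprSr mcoeffMsumX => /eqP /eqP coef_neq0.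
have [i Ai] : exists2 i, A i & (0 < m i)%N &&
    (((\sum_(i | A i) 'X_i) ^+ N : {mpoly F[n]})@_(m - U_(i))%MM != 0).
  apply/exists_inP; apply: contraNT coef_neq0 => /exists_inPn coef_eq0.
  by apply/eqP/big1 => i /coef_eq0; case: ifP => //= _ /negPn /eqP.
case/andP=> mi_gt0 /IHN [degm suppm].
rewrite -(@submK _ U_(i) m) ?lep1mP -?lt0n //; split.
  by rewrite mdegD degm mdeg1 addn1.
move=> j Aj; rewrite mnmDE suppm // mnm1E.
by case: eqP Aj => // <-; rewrite Ai.
Qed.

Lemma mcoeff_sumX_exp_sqfree N m :
  msqfree m -> (forall i, ~~ A i -> m i = 0%N) -> mdeg m = N ->
  ((\sum_(i | A i) 'X_i) ^+ N : {mpoly F[n]})@_m = N`!%:R.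
Proof.
elim: N m => [|N IHN] m /msqfreeP m01 suppm degm.
  by move/eqP: degm; rewrite mdeg_eq0 => /eqP ->; rewrite expr0 mcoeff1 eqxx.
rewrite exprSr mcoeffMsumX (eq_bigr (fun i => (m i * N`!)%:R)); last first.
  move=> i Ai; case: ifP => [mi_gt0|]; last by case: (m i).
  have mi1 : m i = 1%N by move: (m01 i) mi_gt0; case: (m i) => [|[|]].
  have mE : m = (m - U_(i) + U_(i))%MM by rewrite submK // lep1mP mi1.
  rewrite mi1 mul1n IHN //.
  - by apply/msqfreeP => j; rewrite mnmBE (leq_trans (leq_subr _ _)).
  - by move=> j Aj; rewrite mnmBE suppm.
  - by move: degm; rewrite {1}mE mdegD mdeg1 addn1 => -[].
rewrite -natr_sum -big_distrl /= factS -degm mdegE [in RHS](bigID A) /=.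
by rewrite [X in (_ + X)%N]big1 ?addn0.
Qed.

Lemma In_ideal_sumX_exp_gt_card N : (#|A| < N)%N ->
  In_ideal ((\sum_(i | A i) 'X_i) ^+ N : {mpoly F[n]}).
Proof.
move=> lt_AN; apply: In_ideal_nonsqfree => m; rewrite mcoeff_msupp.
case/msupp_sumX_exp=> degm suppm; apply/negP => /msqfreeP m01.
suff : (mdeg m <= #|A|)%N by rewrite degm leqNgt lt_AN.
rewrite mdegE (bigID A) /= [X in (_ + X)%N]big1 ?addn0; last exact: suppm.
by rewrite -sum1_card leq_sum.
Qed.

End PartialLinearForm.

(* The sum of the variables outside A has fewer than p - 1 terms, so its
   (p - 1)-th power has no squarefree monomial. *)
Lemma In_ideal_sumX_exp (F : fieldType) n (A : pred 'I_n) p :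
  (#|[predC A]| + 2 <= p)%N ->
  In_ideal ((\sum_(i | A i) 'X_i) ^+ p : {mpoly F[n]}).
Proof.
case: p => [|N] le_p; first by rewrite addn2 in le_p.
have -> : \sum_(i | A i) 'X_i = \sum_i 'X_i - \sum_(i | predC A i) 'X_i :> {mpoly F[n]}.
  by rewrite [\sum_i 'X_i](bigID A) /= addrK.
have [Q ->] := exprD_mod_sqr (\sum_i 'X_i) (- \sum_(i | predC A i) 'X_i : {mpoly F[n]}) N.
apply: in_idealD; first by rewrite mulrC; apply/in_idealMl/in_ideal_gen; right.
rewrite exprNn -mulrA; apply/in_idealMl/in_idealMr/In_ideal_sumX_exp_gt_card.
by move: le_p; rewrite addn2 ltnS.
Qed.



Section Unbalanced.
Variables (F : fieldType) (n : nat).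
Hypothesis char_F : [pchar F] =i pred0.
Implicit Types (mu m T : 'X_{1..n}) (W : pred 'I_n).

Lemma nonsqfree_in_initial mu : ~~ msqfree mu -> initial_ideal (@In_ideal F n) 'X_[mu].
Proof.
rewrite negb_forall => /existsP [i]; rewrite -ltnNge => mi_gt1.
apply: (initial_idealX_of_lead (f := 'X_[U_(i) *+ 2]) _ (is_lead_monoX _ _)).
  by apply: in_ideal_gen; left; exists i; rewrite mpolyXn.
apply/mnm_lepP => j; rewrite mulmnE mnm1E.
by case: eqP => [<-|]; rewrite ?mul1n ?mul0n // ltnW.
Qed.

Lemma lead_sqfree_part_sumX_exp W p T :
  msqfree T -> (forall i, ~~ W i -> T i = 0%N) -> mdeg T = p ->
  (forall m, msqfree m -> (forall i, ~~ W i -> m i = 0%N) -> mdeg m = p ->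
     m != T -> revlex_lt m T) ->
  is_lead_mono (sqfree_part ((\sum_(i | W i) 'X_i) ^+ p : {mpoly F[n]})) T.
Proof.
move=> sqT suppT degT maxT; split=> [|m]; rewrite !mcoeff_msupp mcoeff_msupp_filter.
  rewrite sqT (mcoeff_sumX_exp_sqfree _ sqT suppT degT).
  by rewrite ((pcharf0P F).1 char_F) -lt0n fact_gt0.
case: ifP => [sqm /msupp_sumX_exp [degm suppm]|_]; last by rewrite eqxx.
exact: maxT.
Qed.

Definition mprefix x mu : 'X_{1..n} := [multinom if (i < x)%N then mu i else 0%N | i < n].

Lemma mprefixE x mu i : mprefix x mu i = if (i < x)%N then mu i else 0%N.
Proof. by rewrite mnmE. Qed.

Lemma revlex_lt_mprefix mu x m :
  msqfree mu -> msqfree m -> (forall i : 'I_n, (i < x)%N -> mu i = 0%N -> m i = 0%N) ->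
  mdeg m = mdeg (mprefix x mu) -> m != mprefix x mu -> revlex_lt m (mprefix x mu).
Proof.
set T := mprefix x mu; move=> /msqfreeP mu01 /msqfreeP m01 suppm degm neq.
case/orP: (revlex_lt_total degm neq) => //; rewrite /revlex_lt degm ltnn /=.
case/andP=> _ /existsP [i /andP [lt_i /forallP eq_gt_i]].
have [mi0 Ti1] : m i = 0%N /\ T i = 1%N.
  by move: lt_i (m01 i); rewrite mprefixE; case: ifP => // _; move: (mu01 i); lia.
have lt_ix : (i < x)%N by move: Ti1; rewrite mprefixE; case: ifP.
suff : (mdeg m + 1 <= mdeg T)%N by rewrite degm addn1 ltnn.
rewrite !mdegE (bigD1 i) //= [in leqRHS](bigD1 i) //= mi0 Ti1 add0n addnC leq_add2l.
apply: leq_sum => j neq_ji.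
have [lt_ij|lt_ji] : (i < j)%N \/ (j < i)%N by move: neq_ji; rewrite -val_eqE /=; lia.
  by move/implyP: (eq_gt_i j) => /(_ lt_ij) /eqP ->.
have lt_jx := ltn_trans lt_ji lt_ix.
rewrite mprefixE lt_jx; case: (mu j =P 0%N) => [/(suppm j lt_jx) -> //|].
by move: (mu01 j) (m01 j); lia.
Qed.

Lemma unbalanced_in_initial mu : ~~ balanced mu -> initial_ideal (@In_ideal F n) 'X_[mu].
Proof.
case/nandP; first exact: nonsqfree_in_initial.
case sqmu: (msqfree mu); last by move/negbT: sqmu => /nonsqfree_in_initial.
rewrite negb_forall => /existsP [x]; rewrite -ltnNge => unbal_x.
have mu01 := msqfreeP _ sqmu.
set p := prefix_sum _ x in unbal_x.
set T := mprefix x mu.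
set W := [pred i : 'I_n | (x <= i)%N || (mu i == 1%N)].
have degT : mdeg T = p.
  by rewrite mdegE (eq_bigr _ (fun i _ => mprefixE x mu i)) /p /prefix_sum [RHS]big_mkcond.
have sqT : msqfree T by apply/msqfreeP => i; rewrite mprefixE; case: ifP.
have suppT i : ~~ W i -> T i = 0%N.
  by rewrite inE negb_or -ltnNge mprefixE => /andP [-> /negPf]; move: (mu01 i); case: (mu i) => [|[]].
apply: (@initial_idealX_of_lead _ _ _ (sqfree_part ((\sum_(i | W i) 'X_i) ^+ p)) T).
- apply/In_ideal_sqfree_part/In_ideal_sumX_exp.
  have cardW : #|[predC W]| = prefix_sum (fun i => 1 - mu i)%N x.
    rewrite -sum1_card /prefix_sum big_mkcond [RHS]big_mkcond; apply: eq_bigr => i _.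
    by rewrite !inE; case: ltnP => //= _; move: (mu01 i); case: (mu i) => [|[]].
  have := prefix_sum_compl mu01 (ltn_ord x : x <= n)%N.
  rewrite -cardW -/p; move: unbal_x; move: #|_| => c; lia.
- apply: lead_sqfree_part_sumX_exp => // m sqm suppm degm.
  apply: (revlex_lt_mprefix sqmu sqm); last by rewrite degm.
  by move=> i lt_ix mui0; apply: suppm; rewrite inE negb_or -ltnNge lt_ix mui0.
- by apply/mnm_lepP => i; rewrite mprefixE; case: ifP.
Qed.

End Unbalanced.

Lemma mcoeff_ones_MXsq (F : fieldType) K (q : {mpoly F[K]}) (c : F) (t : 'I_K) :
  (q * (c *: 'X_t) ^+ 2)@_[multinom 1%N | _ < K] = 0.
Proof.
rewrite exprZn -scalerAr mcoeffZ mpolyXn; apply/eqP; rewrite mulf_eq0; apply/orP; right.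
rewrite mcoeff_eq0 (perm_mem (msuppMX _ _)); apply/mapP => -[m _ onesE].
by have := congr1 (fun m : 'X_{1..K} => m t) onesE; rewrite /= mnmE mnmDE mulmnE mnm1E eqxx; lia.
Qed.

Section Substitution.
Variables (F : fieldType) (n K : nat) (T : 'X_{1..n}).
Hypotheses (balT : balanced T) (degT : mdeg T = K.+1) (lt_2K_n : (2 * K < n)%N).
Implicit Types (i b : 'I_n) (t : 'I_K.+1) (m : 'X_{1..n}).

(* x_i goes to y_(rank1 i) if it divides X^T, and to -y_(rank0 i + 1) or 0 if not. *)
Let rank1 i := prefix_sum (fun j => T j) i.
Let rank0 i := prefix_sum (fun j => 1 - T j)%N i.
Let slot i : 'I_K.+1 := inord (if T i == 1%N then rank1 i else (rank0 i).+1).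
Let weight i : F :=
  if T i == 1%N then 1 else if ((rank0 i).+1 < K.+1)%N then -1 else 0.
Let subst : n.-tuple {mpoly F[K.+1]} := [tuple weight i *: 'X_(slot i) | i < n].
Let ones : 'X_{1..K.+1} := [multinom 1%N | _ < K.+1].

Let T_le1 i : (T i <= 1)%N.
Proof. by case/andP: balT => /msqfreeP. Qed.

Let T_eq0 i : T i != 1%N -> T i = 0%N.
Proof. by move: (T_le1 i); case: (T i) => [|[]]. Qed.

Let rank1_lt i : T i = 1%N -> (rank1 i < K.+1)%N.
Proof.
by move=> Ti1; move: (leq_prefix_sum_total (fun j => T j) i); rewrite Ti1 addn1 -mdegE degT.
Qed.

Let slot_one i : T i = 1%N -> slot i = rank1 i :> nat.
Proof. by move=> Ti1; rewrite /slot Ti1 inordK ?rank1_lt. Qed.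

Let card_rank1 t : (\sum_i ((T i == 1%N) && (rank1 i == t)) = 1)%N.
Proof. by rewrite (@sum_prefix_rank_eq _ (fun j => T j) t T_le1) -mdegE degT ltn_ord. Qed.

Let card_rank0 (t : nat) : (t < K)%N ->
  (\sum_i ((T i != 1%N) && (rank0 i == t)) = 1)%N.
Proof.
move=> lt_tK; rewrite (eq_bigr (fun i => ((1 - T i == 1)%N && (rank0 i == t) : nat))).
  rewrite (@sum_prefix_rank_eq _ (fun j => 1 - T j)%N) => [|i]; last by rewrite leq_subr.
  have := prefix_sum_compl T_le1 (leqnn n).
  by rewrite !prefix_sum_total // -mdegE degT; lia.
by move=> i _; move: (T_le1 i); case: (T i) => [|[]].
Qed.

Let sum_weight_slot t :
  \sum_i (if slot i == t then weight i else 0) = (t == ord0)%:R.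
Proof.
have wE i : (if slot i == t then weight i else 0) =
    ((T i == 1%N) && (rank1 i == t))%:R -
    ((T i != 1%N) && ((rank0 i).+1 < K.+1)%N && ((rank0 i).+1 == t))%:R.
  rewrite /weight; case: (T i =P 1%N) => [Ti1 | Ti_neq1] /=.
    by rewrite -val_eqE /= slot_one // subr0; case: (_ == _).
  case: ltnP => [lt_K | _] /=; last by case: (_ == _); rewrite subr0.
  rewrite -val_eqE /= /slot (introF eqP Ti_neq1) inordK //.
  by rewrite sub0r; case: (_ == _); rewrite ?oppr0.
rewrite (eq_bigr _ (fun i _ => wE i)) sumrB -!natr_sum card_rank1.
clear wE; case: t => -[|t] lt_tK /=.
  by rewrite big1 ?subr0 // => i _; rewrite andbF.
rewrite (eq_bigr (fun i => ((T i != 1%N) && (rank0 i == t) : nat))) => [|i _].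
  by rewrite card_rank0 ?subrr //; lia.
by rewrite eqSS; case: (rank0 i =P t) => [->|]; rewrite ?lt_tK ?andbT ?andbF.
Qed.

Let sum_subst : \sum_i tnth subst i = 'X_(ord0).
Proof.
apply/mpolyP => u; rewrite raddf_sum /= mcoeffX.
under eq_bigr do rewrite tnth_mktuple mcoeffZ mcoeffX.
have [/mdeg1P [t /eqP ->] | deg_neq1] := boolP (mdeg u == 1%N).
  rewrite eq_mnm1 eq_sym -(sum_weight_slot t); apply: eq_bigr => i _.
  by rewrite eq_mnm1; case: (_ == _); rewrite ?mulr1 ?mulr0.
have U_neq (a : 'I_K.+1) : (U_(a)%MM == u) = false.
  by apply: contraNF deg_neq1 => /eqP <-; rewrite mdeg1.
by rewrite U_neq big1 // => i _; rewrite U_neq mulr0.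
Qed.

Let mcoeff_ones_comp m : ('X_[m] \mPo subst)@_ones =
  (\prod_i weight i ^+ m i) * ((\sum_i U_(slot i) *+ m i)%MM == ones)%:R.
Proof.
rewrite comp_mpolyX (eq_bigr (fun i => weight i ^+ m i *: 'X_[U_(slot i) *+ m i])); last first.
  by move=> i _; rewrite tnth_mktuple exprZn mpolyXn.
by rewrite scaler_prod mcoeffZ -(big_morph _ (@mpolyXD _ _) (@mpolyX0 _ _)) mcoeffX.
Qed.

Let slots_ones m : (\sum_i U_(slot i) *+ m i)%MM = ones <->
  forall t, (\sum_i (slot i == t) * m i = 1)%N.
Proof.
rewrite -[_ = _]/(_ = _ :> 'X_{1..K.+1}); split=> [mE t | fibers].
  move/(congr1 (fun u : 'X_{1..K.+1} => u t)): mE; rewrite mnm_sumE mnmE.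
  by under eq_bigr do rewrite mulmnE mnm1E.
apply/mnmP => t; rewrite mnm_sumE mnmE -(fibers t).
by apply: eq_bigr => i _; rewrite mulmnE mnm1E mulnC.
Qed.

Let mdeg_slots_ones m : (forall t, \sum_i (slot i == t) * m i = 1)%N -> mdeg m = K.+1.
Proof.
move=> fibers; rewrite mdegE -[K.+1]card_ord -sum1_card.
under [RHS]eq_bigr => t _ do rewrite -(fibers t).
rewrite exchange_big; apply: eq_bigr => i _.
by rewrite (bigD1 (slot i)) //= eqxx mul1n big1 ?addn0 // => t; rewrite eq_sym => /negPf ->.
Qed.

Let exists_rank1 t : exists2 b, T b = 1%N & rank1 b = t.
Proof.
have /existsP [b /andP [/eqP Tb1 /eqP rank_b]] : [exists b, (T b == 1%N) && (rank1 b == t)].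
  apply: contraT; rewrite negb_exists => /forallP no_b.
  by move: (card_rank1 t); rewrite big1 // => j _; apply/eqP; rewrite eqb0 no_b.
by exists b.
Qed.

Let mcoeff_ones_compT : ('X_[T] \mPo subst)@_ones != 0.
Proof.
rewrite mcoeff_ones_comp big1 => [|i _]; last first.
  by rewrite /weight; case: eqP => [_|/eqP/T_eq0 ->]; rewrite ?expr1n ?expr0.
suff /slots_ones -> : forall t, (\sum_i (slot i == t) * T i = 1)%N by rewrite eqxx mul1r oner_eq0.
move=> t; rewrite -(card_rank1 t); apply: eq_bigr => i _.
case: (T i =P 1%N) => [Ti1 | /eqP/T_eq0 ->]; last by rewrite muln0.
by rewrite Ti1 muln1 -val_eqE /= slot_one.
Qed.

Let rank_lt_zero_one i b :
  T i != 1%N -> T b = 1%N -> rank1 b = (rank0 i).+1 -> (i < b)%N.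
Proof.
move=> Ti_neq1 Tb1 rank_b; rewrite ltnNge leq_eqVlt; apply/negP => /orP [/eqP/val_inj bi | lt_bi].
  by rewrite -bi Tb1 in Ti_neq1.
have le_rank : (rank1 b + 1 <= rank1 i)%N.
  by rewrite -Tb1 /rank1 -prefix_sum_ord leq_prefix_sum.
have rank_i : (rank1 i + rank0 i = i)%N.
  by rewrite addnC; apply: prefix_sum_compl T_le1 (ltnW (ltn_ord i)).
have bal_i : (2 * rank1 i <= i + 1)%N.
  by case/andP: balT => _ /forallP /(_ (widen_ord (leqnSn n) i)).
by move: le_rank; rewrite rank_b; lia.
Qed.

Let mcoeff_ones_comp_revlex_lt m : revlex_lt m T -> ('X_[m] \mPo subst)@_ones = 0.
Proof.
move=> lt_mT; apply/eqP; apply: contraT; rewrite mcoeff_ones_comp mulf_eq0 negb_or.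
case/andP=> /prodf_neq0 weight_neq0.
case: (_ =P ones) => [/slots_ones fibers _ | _]; last by rewrite eqxx.
have deg_m := mdeg_slots_ones fibers.
move: lt_mT; rewrite /revlex_lt deg_m degT ltnn eqxx /=.
case/existsP=> i /andP [lt_i /forallP eq_gt_i].
have fiber_i := fibers (slot i); rewrite (bigD1 i) //= eqxx mul1n in fiber_i.
have [mi1 Ti0] : m i = 1%N /\ T i = 0%N by move: lt_i (T_le1 i) fiber_i; lia.
have lt_rank0 : ((rank0 i).+1 < K.+1)%N.
  move: (weight_neq0 i isT); rewrite /weight Ti0 mi1 expr1; case: ltnP => //.
  by rewrite eqxx.
(* By balance, the variable of T sent to y_(slot i) comes after x_i, so m uses it too. *)
have [b Tb1 rank_b] := exists_rank1 (Ordinal lt_rank0).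
have lt_ib : (i < b)%N by apply: rank_lt_zero_one Tb1 rank_b; rewrite Ti0.
have mb1 : m b = 1%N by rewrite -Tb1; move/implyP: (eq_gt_i b) => /(_ lt_ib) /eqP.
move: fiber_i; rewrite (bigD1 b) /=; last by rewrite -val_eqE /= gtn_eqF.
have -> : slot b == slot i.
  by rewrite -val_eqE /= slot_one // rank_b /slot Ti0 inordK.
by rewrite mb1 mi1; lia.
Qed.

Lemma balanced_notin_initial : ~ initial_ideal (@In_ideal F n) 'X_[T].
Proof.
apply: (notin_initial_In_ideal (lq := subst) (o := ones)).
- by move=> q i; rewrite tnth_mktuple; apply: mcoeff_ones_MXsq.
- by move=> q; rewrite sum_subst -[X in X ^+ 2]scale1r; apply: mcoeff_ones_MXsq.
- exact: mcoeff_ones_compT.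
- exact: mcoeff_ones_comp_revlex_lt.
Qed.

End Substitution.

Lemma balancedDU n (mu : 'X_{1..n}) (j : 'I_n) :
  balanced mu -> (2 * mdeg mu < n)%N -> mu j = 0%N ->
  (forall i : 'I_n, (j < i)%N -> mu i != 0%N) -> balanced (mu + U_(j)).
Proof.
case/andP=> /msqfreeP mu01 /forallP bal_mu small_mu muj0 mu_gt_j.
have mu1 (i : 'I_n) : (j < i)%N -> mu i = 1%N by move/mu_gt_j; move: (mu01 i); lia.
apply/andP; split.
  by apply/msqfreeP => i; rewrite mnmDE mnm1E; case: eqP => [<-|]; rewrite ?muj0 ?addn0.
apply/forallP => x; have le_xn : (x <= n)%N := ltn_ord x.
have -> : prefix_sum (fun i => (mu + U_(j))%MM i) x = prefix_sum (fun i => mu i + (j == i))%N x.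
  by apply: eq_bigr => i _; rewrite mnmDE mnm1E.
rewrite prefix_sumD prefix_sum_delta.
case: (ltnP j x) => [lt_jx | _]; last by rewrite addn0 bal_mu.
have := prefix_sum_suffix1 (b := mu) le_xn.
rewrite -mdegE => /(_ (fun i le_xi => mu1 i (leq_trans lt_jx le_xi))).
by move: small_mu lt_jx le_xn; rewrite /=; lia.
Qed.

Lemma exists_balanced_extension n (mu : 'X_{1..n}) :
  balanced mu -> (2 * mdeg mu < n)%N ->
  exists mu', [/\ (mu <= mu')%MM, mdeg mu' = (mdeg mu).+1 & balanced mu'].
Proof.
move=> bal_mu small_mu.
have [i0 mu_i0] : exists i0 : 'I_n, mu i0 == 0%N.
  apply/existsP; apply: contraLR small_mu => /existsPn mu_neq0.
  suff : (n <= mdeg mu)%N by lia.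
  rewrite -[X in (X <= _)%N]card_ord -sum1_card mdegE.
  by apply: leq_sum => i _; rewrite lt0n mu_neq0.
case: (@arg_maxnP _ i0 (fun i => mu i == 0%N) (@nat_of_ord n) mu_i0) => j /eqP muj0 max_j.
exists (mu + U_(j))%MM; split; first by apply/mnm_lepP => i; rewrite mnmDE leq_addr.
  by rewrite mdegD mdeg1 addn1.
by apply: balancedDU => // i; apply: contraTN => /max_j; rewrite -leqNgt.
Qed.

Lemma exists_notin_initial_extension (F : fieldType) n (mu : 'X_{1..n}) :
  [pchar F] =i pred0 -> (2 * mdeg mu < n)%N -> ~ initial_ideal (@In_ideal F n) 'X_[mu] ->
  exists mu' : 'X_{1..n}, (forall i, mu i <= mu' i)%N /\ mdeg mu' = (mdeg mu).+1 /\
    ~ initial_ideal (@In_ideal F n) 'X_[mu'].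
Proof.
move=> char_F small_mu notin_mu.
have bal_mu : balanced mu by apply/negPn/negP => /(unbalanced_in_initial char_F).
have [mu' [/mnm_lepP le_mu' deg_mu' bal_mu']] := exists_balanced_extension bal_mu small_mu.
exists mu'; split; first exact: le_mu'.
by split; last exact: balanced_notin_initial bal_mu' deg_mu' small_mu.
Qed.

Unset Implicit Arguments.

Theorem mainTheorem6 (F : fieldType) (d : nat)
  (hchar : [pchar F] =i pred0) (hd : (2 <= d)%N)
  (mu : 'X_{1..(2 * d - 2)}) :
  (mdeg mu <= d - 2)%N ->
  ~ initial_ideal (@In_ideal F (2 * d - 2)) 'X_[mu] ->
  exists mu' : 'X_{1..(2 * d - 2)},
    (forall i, (mu i <= mu' i)%N) /\
    mdeg mu' = (mdeg mu).+1 /\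
    ~ initial_ideal (@In_ideal F (2 * d - 2)) 'X_[mu'].
Proof.
move=> deg_mu; apply: exists_notin_initial_extension hchar _.
by move: deg_mu hd; lia.
Qed.
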